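(* Let $\varphi$ be a finite conjunction of literals of the two forms $x\in y$ and $x = y\setminus z$ (with $x,y,z$ set variables), with finite set of variables $\mathrm{Vars}(\varphi)$. Let $M$ be a set assignment over $\mathrm{Vars}(\varphi)$ satisfying $\varphi$; let $\bar x,\bar y\in\mathrm{Vars}(\varphi)$, let $\overline{M}$ be a set assignment over $\mathrm{Vars}(\varphi)$ satisfying $\varphi$ with $\overline{M}\bar x\neq \overline{M}\bar y$, and let $\mathfrak{t}$ be a set belonging to exactly one of $\overline{M}\bar x$, $\overline{M}\bar y$. Fix a set $\mathfrak{s}$ with $\mathrm{rk}(\mathfrak{s})>\mathrm{rk}(M)$. Define $\mathsf{V}_0=\{u\in\mathrm{Vars}(\varphi)\mid \mathfrak{t}\in\overline{M}u\}$; $\mathsf{V}_n=\{u\in\mathrm{Vars}(\varphi)\mid Mu\cap\{Mw\mid w\in\mathsf{V}_{n-1}\}\neq\emptyset\}$ for $n\ge1$; $M_0v=Mv\cup\{\mathfrak{s}\}$ if $v\in\mathsf{V}_0$ and $M_0v=Mv$ otherwise; for $n\ge1$, $M_nv=M_{n-1}v\cup\{M_{n-1}u\mid u\in\mathsf{V}_{n-1},\ Mu\in Mv\}$ if $v\in\mathsf{V}_n$ and $M_nv=M_{n-1}v$ otherwise. Then for all $n\in\mathbb{N}$ and $v,x\in\mathrm{Vars}(\varphi)$: (a) $M_nv\neq\mathfrak{s}$; (b) $\mathfrak{s}\in M_nx$ if and only if $\mathfrak{s}\in M_0x$.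
   Context: A set assignment is a map from a finite set of set variables into the von Neumann universe $\mathcal{V}=\bigcup_\alpha\mathcal{V}_\alpha$, $\mathcal{V}_\alpha=\bigcup_{\beta<\alpha}\mathcal{P}(\mathcal{V}_\beta)$; it satisfies $x\in y$ iff $Mx\in My$ and $x=y\setminus z$ iff $Mx=My\setminus Mz$. The rank $\mathrm{rk}(s)$ of a set $s$ is the least ordinal $\alpha$ with $s\subseteq\mathcal{V}_\alpha$, and $\mathrm{rk}(M)=\max\{\mathrm{rk}(Mx)\mid x\in\mathrm{dom}(M)\}$. *)

(* Sets of the von Neumann universe are modelled by Aczel's
   well-founded trees (the standard type-theoretic model of set theory),
   with extensional equality [Eq] and membership [In_V]. *)
From Stdlib Require Import List ClassicalEpsilon.
Import ListNotations.

Inductive V : Type := sup (A : Type) (f : A -> V).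

Definition idx (a : V) : Type := match a with sup A _ => A end.
Definition elts (a : V) : idx a -> V := match a with sup _ f => f end.

Fixpoint Eq (a b : V) : Prop :=
  match a, b with
  | sup A f, sup B g =>
      (forall i, exists j, Eq (f i) (g j)) /\ (forall j, exists i, Eq (f i) (g j))
  end.

Definition In_V (a b : V) : Prop := exists j : idx b, Eq a (elts b j).

Definition union (a b : V) : V :=
  sup (idx a + idx b) (fun p => match p with inl i => elts a i | inr j => elts b j end).
Definition single (s : V) : V := sup unit (fun _ => s).
Definition setdiff (y z : V) : V :=
  sup {i : idx y | ~ In_V (elts y i) z} (fun p => elts y (proj1_sig p)).

(* von Neumann ordinals: successor, and rank
   rk(a) = least alpha with a ⊆ V_alpha = U_{a' in a} (rk(a') + 1) *)
Definition succV (x : V) : V := union x (single x).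
Fixpoint rk (a : V) : V :=
  match a with
  | sup A f => sup {i : A & idx (succV (rk (f i)))}
                   (fun p => elts (succV (rk (f (projT1 p)))) (projT2 p))
  end.
Definition rk_lt (a b : V) : Prop := In_V (rk a) (rk b).

Inductive literal : Type :=
| LIn (x y : nat)
| LDiff (x y z : nat).

Definition formula := list literal.

Definition lit_vars (l : literal) : list nat :=
  match l with LIn x y => [x; y] | LDiff x y z => [x; y; z] end.
Definition Vars (phi : formula) : list nat := flat_map lit_vars phi.

(* a set assignment over Vars(phi) is represented by a total map nat -> V,
   of which only the values on Vars(phi) matter *)
Definition sat_lit (M : nat -> V) (l : literal) : Prop :=
  match l with
  | LIn x y => In_V (M x) (M y)
  | LDiff x y z => Eq (M x) (setdiff (M y) (M z))
  end.
Definition sat (M : nat -> V) (phi : formula) : Prop :=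
  forall l, In l phi -> sat_lit M l.

(* rk(M) = max { rk(M x) | x in Vars(phi) } (as an ordinal, the union) *)
Definition rk_assign (phi : formula) (M : nat -> V) : V :=
  sup {x : nat & {_ : In x (Vars phi) & idx (rk (M x))}}
      (fun p => elts (rk (M (projT1 p))) (projT2 (projT2 p))).

Definition rk_gt_assign (s : V) (phi : formula) (M : nat -> V) : Prop :=
  In_V (rk_assign phi M) (rk s).

Fixpoint Vset (phi : formula) (M Mbar : nat -> V) (t : V) (n : nat) (u : nat) : Prop :=
  match n with
  | 0 => In u (Vars phi) /\ In_V t (Mbar u)
  | S m => In u (Vars phi) /\
           exists e, In_V e (M u) /\
             exists w, Vset phi M Mbar t m w /\ Eq e (M w)
  end.

Fixpoint Mn (phi : formula) (M Mbar : nat -> V) (t s : V) (n : nat) (v : nat) : V :=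
  match n with
  | 0 => if excluded_middle_informative (Vset phi M Mbar t 0 v)
         then union (M v) (single s) else M v
  | S m =>
      if excluded_middle_informative (Vset phi M Mbar t (S m) v)
      then union (Mn phi M Mbar t s m v)
                 (sup {u : nat | Vset phi M Mbar t m u /\ In_V (M u) (M v)}
                      (fun p => Mn phi M Mbar t s m (proj1_sig p)))
      else Mn phi M Mbar t s m v
  end.

From Stdlib Require Import List ClassicalEpsilon.

(* Each M_n v is either M v itself or has s hereditarily as a member: what
   stage 0 adds is s, and what stage n+1 adds are sets M_n u with u in V_n,
   which by induction contain s hereditarily.  M_n v = s is then impossible:
   in the first case because rk(M v) <= rk(M) < rk(s), in the second by
   well-foundedness of membership.  Consequently the sets added at stages
   n > 0 are never s, so membership of s is settled at stage 0. *)

Lemma Eq_refl (a : V) : Eq a a.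
Proof. induction a as [A f IH]; simpl; split; intro i; exists i; apply IH. Qed.

Lemma Eq_sym (a b : V) : Eq a b -> Eq b a.
Proof.
  revert b; induction a as [A f IH]; intros [B g] [H1 H2]; simpl; split.
  - intro j; destruct (H2 j) as [i Hi]; exists i; apply IH; exact Hi.
  - intro i; destruct (H1 i) as [j Hj]; exists j; apply IH; exact Hj.
Qed.

Lemma Eq_trans (a b c : V) : Eq a b -> Eq b c -> Eq a c.
Proof.
  revert b c; induction a as [A f IH]; intros [B g] [C h] [H1 H2] [K1 K2]; simpl;
    split.
  - intro i; destruct (H1 i) as [j Hj]; destruct (K1 j) as [k Hk];
      exists k; eapply IH; eauto.
  - intro k; destruct (K2 k) as [j Hj]; destruct (H2 j) as [i Hi];
      exists i; eapply IH; eauto.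
Qed.

Lemma Eq_elts_l (a b : V) :
  Eq a b -> forall k : idx a, exists k', Eq (elts a k) (elts b k').
Proof. destruct a, b; intros [H1 _]; exact H1. Qed.

Lemma Eq_elts_r (a b : V) :
  Eq a b -> forall k : idx b, exists k', Eq (elts a k') (elts b k).
Proof. destruct a, b; intros [_ H2]; exact H2. Qed.

Lemma In_V_Eq_l (x y a : V) : Eq x y -> In_V x a -> In_V y a.
Proof.
  intros E [j Hj]; exists j; exact (Eq_trans _ _ _ (Eq_sym _ _ E) Hj).
Qed.

Lemma In_V_Eq_r (x a b : V) : Eq a b -> In_V x a -> In_V x b.
Proof.
  intros E [j Hj]; destruct (Eq_elts_l a b E j) as [k Hk].
  exists k; exact (Eq_trans _ _ _ Hj Hk).
Qed.

Lemma In_V_union (x a b : V) : In_V x (union a b) <-> In_V x a \/ In_V x b.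
Proof.
  split.
  - intros [[j|j] Hj]; [left|right]; exists j; exact Hj.
  - intros [[j Hj]|[j Hj]]; [exists (inl j)|exists (inr j)]; exact Hj.
Qed.

Lemma In_V_union_single (a x : V) : In_V x (union a (single x)).
Proof. apply In_V_union; right; exists tt; apply Eq_refl. Qed.

Inductive InTC (x : V) : V -> Prop :=
| InTC_In z : In_V x z -> InTC x z
| InTC_step y z : In_V y z -> InTC x y -> InTC x z.

Lemma InTC_Eq_r (x a b : V) : Eq a b -> InTC x a -> InTC x b.
Proof.
  intros E H; destruct H as [z Hz|y z Hy Hyz].
  - apply InTC_In; exact (In_V_Eq_r _ _ _ E Hz).
  - apply (InTC_step _ y); [exact (In_V_Eq_r _ _ _ E Hy)|exact Hyz].
Qed.

Lemma InTC_In_l (x y z : V) : In_V y x -> InTC x z -> InTC y z.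
Proof.
  intros Hy H; induction H as [z Hz|w z Hw _ IH].
  - exact (InTC_step _ _ _ Hz (InTC_In _ _ Hy)).
  - exact (InTC_step _ _ _ Hw IH).
Qed.

Lemma InTC_irrefl (x : V) : ~ InTC x x.
Proof.
  assert (Hwf : forall a x, Eq x a -> ~ InTC x x); [|exact (Hwf x x (Eq_refl x))].
  induction a as [A f IH]; intros y E H; inversion H as [z Hz|w z Hw Hwz]; subst.
  - destruct (In_V_Eq_r _ _ _ E Hz) as [i Hi].
    apply (IH i (f i) (Eq_refl _)), InTC_In.
    exact (In_V_Eq_r _ _ _ Hi (In_V_Eq_l _ _ _ Hi Hz)).
  - destruct (In_V_Eq_r _ _ _ E Hw) as [i Hi].
    exact (IH i w Hi (InTC_In_l _ _ _ Hw Hwz)).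
Qed.

Lemma In_V_irrefl (a : V) : ~ In_V a a.
Proof. intro H; exact (InTC_irrefl a (InTC_In _ _ H)). Qed.

Lemma rk_Eq (a b : V) : Eq a b -> Eq (rk a) (rk b).
Proof.
  revert b; induction a as [A f IH]; intros [B g] [H1 H2]; simpl; split.
  - intros [i p]; destruct (H1 i) as [j Hj]; pose proof (IH i (g j) Hj) as E.
    destruct p as [k|[]].
    + destruct (Eq_elts_l _ _ E k) as [k' Hk]; exists (existT _ j (inl k')); exact Hk.
    + exists (existT _ j (inr tt)); exact E.
  - intros [j p]; destruct (H2 j) as [i Hi]; pose proof (IH i (g j) Hi) as E.
    destruct p as [k|[]].
    + destruct (Eq_elts_r _ _ E k) as [k' Hk]; exists (existT _ i (inl k')); exact Hk.
    + exists (existT _ i (inr tt)); exact E.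
Qed.

Lemma rk_assign_not_In_rk (phi : formula) (M : nat -> V) (v : nat) :
  In v (Vars phi) -> ~ In_V (rk_assign phi M) (rk (M v)).
Proof.
  intros Hv [j Hj]; apply (In_V_irrefl (rk_assign phi M)).
  apply (In_V_Eq_l _ _ _ (Eq_sym _ _ Hj)).
  exists (existT _ v (existT _ Hv j)); apply Eq_refl.
Qed.

Lemma not_Eq_assign_rk_gt (phi : formula) (M : nat -> V) (s : V) (v : nat) :
  rk_gt_assign s phi M -> In v (Vars phi) -> ~ Eq (M v) s.
Proof.
  intros Hrk Hv E; apply (rk_assign_not_In_rk phi M v Hv).
  exact (In_V_Eq_r _ _ _ (Eq_sym _ _ (rk_Eq _ _ E)) Hrk).
Qed.

Section Stages.

Variables (phi : formula) (M Mbar : nat -> V) (t s : V).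

Local Notation Vs := (Vset phi M Mbar t).
Local Notation Ms := (Mn phi M Mbar t s).

Lemma Vset_Vars (n u : nat) : Vs n u -> In u (Vars phi).
Proof. destruct n; simpl; tauto. Qed.

Lemma VsetS_pred (n v : nat) : Vs (S n) v -> exists w, Vs n w /\ In_V (M w) (M v).
Proof.
  intros [_ [e [He [w [Hw E]]]]]; exists w; split; [exact Hw|].
  exact (In_V_Eq_l _ _ _ E He).
Qed.

Lemma s_In_Mn0 (v : nat) : Vs 0 v -> In_V s (Ms 0 v).
Proof.
  intro Hv; simpl; destruct (excluded_middle_informative _) as [_|C];
    [apply In_V_union_single|contradiction].
Qed.

Lemma Mn_In_MnS (n w v : nat) :
  Vs n w -> In_V (M w) (M v) -> Vs (S n) v -> In_V (Ms n w) (Ms (S n) v).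
Proof.
  intros Hw Hwv Hv; simpl; destruct (excluded_middle_informative _) as [_|C];
    [|contradiction].
  apply In_V_union; right.
  exists (exist _ w (conj Hw Hwv)); apply Eq_refl.
Qed.

Lemma InTC_s_Mn (n w : nat) : Vs n w -> InTC s (Ms n w).
Proof.
  revert w; induction n as [|n IH]; intros v Hv.
  - exact (InTC_In _ _ (s_In_Mn0 v Hv)).
  - destruct (VsetS_pred n v Hv) as [w [Hw Hwv]].
    exact (InTC_step _ _ _ (Mn_In_MnS n w v Hw Hwv Hv) (IH w Hw)).
Qed.

Lemma Mn_Eq_or_InTC_s (n v : nat) : Eq (Ms n v) (M v) \/ InTC s (Ms n v).
Proof.
  induction n as [|n IH].
  - destruct (excluded_middle_informative (Vs 0 v)) as [Hv|Hv].
    + right; exact (InTC_s_Mn 0 v Hv).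
    + left; simpl; destruct (excluded_middle_informative _); [contradiction|].
      apply Eq_refl.
  - destruct (excluded_middle_informative (Vs (S n) v)) as [Hv|Hv].
    + right; exact (InTC_s_Mn (S n) v Hv).
    + simpl; destruct (excluded_middle_informative _); [contradiction|exact IH].
Qed.

Hypothesis s_rank : rk_gt_assign s phi M.

Lemma Mn_not_Eq_s (n v : nat) : In v (Vars phi) -> ~ Eq (Ms n v) s.
Proof.
  intros Hv E; destruct (Mn_Eq_or_InTC_s n v) as [E'|T].
  - exact (not_Eq_assign_rk_gt phi M s v s_rank Hv
             (Eq_trans _ _ _ (Eq_sym _ _ E') E)).
  - exact (InTC_irrefl s (InTC_Eq_r _ _ _ E T)).
Qed.

Lemma s_In_MnS (n x : nat) : In_V s (Ms (S n) x) <-> In_V s (Ms n x).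
Proof.
  simpl Ms at 1; destruct (excluded_middle_informative _); [|tauto].
  rewrite In_V_union; split; [|tauto].
  intros [Hs|[[u [Hu Huv]] Hsu]]; [exact Hs|exfalso].
  exact (Mn_not_Eq_s n u (Vset_Vars n u Hu) (Eq_sym _ _ Hsu)).
Qed.

Lemma s_In_Mn (n x : nat) : In_V s (Ms n x) <-> In_V s (Ms 0 x).
Proof.
  induction n as [|n IH]; [tauto|].
  rewrite s_In_MnS; exact IH.
Qed.

End Stages.

Theorem lemma6 (phi : formula) (M Mbar : nat -> V) (xb yb : nat) (t s : V) :
  sat M phi ->
  In xb (Vars phi) -> In yb (Vars phi) ->
  sat Mbar phi ->
  ~ Eq (Mbar xb) (Mbar yb) ->
  ((In_V t (Mbar xb) /\ ~ In_V t (Mbar yb)) \/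
   (~ In_V t (Mbar xb) /\ In_V t (Mbar yb))) ->
  rk_gt_assign s phi M ->
  forall (n v x : nat), In v (Vars phi) -> In x (Vars phi) ->
    ~ Eq (Mn phi M Mbar t s n v) s /\
    (In_V s (Mn phi M Mbar t s n x) <-> In_V s (Mn phi M Mbar t s 0 x)).
Proof.
  (* Only the rank of s matters: the claims hold for any M, Mbar and t. *)
  intros _ _ _ _ _ _ Hrk n v x Hv _; split.
  - exact (Mn_not_Eq_s phi M Mbar t s Hrk n v Hv).
  - exact (s_In_Mn phi M Mbar t s Hrk n x).
Qed.
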